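(* Let $d$ be a symmetric nonnegative function on a set $\mathcal X$ with $d(x,z)\le M(d(x,y)+d(y,z))$ for all $x,y,z\in\mathcal X$. Let $\mathcal S\subset\mathcal X$ be finite, $\mathcal C_{\mathrm{OPT}}\subset\mathcal X$ a set of $K$ centers minimizing $\sum_{x\in\mathcal S}\min_{c\in\mathcal C}d(x,c)^2$, and let $A\subseteq\mathcal S$ be one cluster of the partition of $\mathcal S$ induced by $\mathcal C_{\mathrm{OPT}}$ (points sharing the same nearest optimal center). Let $\mathcal C$ be an arbitrary set of centers, $D(a)=\min_{c\in\mathcal C}d(a,c)$, and define $\Upsilon(A)=\sum_{a\in A}\min_{c\in\mathcal C}d(a,c)^2$ and $\Upsilon_{\mathrm{OPT}}(A)=\sum_{a\in A}\min_{c\in\mathcal C_{\mathrm{OPT}}}d(a,c)^2$. If a random center $a_0\in A$ is added to $\mathcal C$, chosen with probability $D(a_0)^2/\sum_{a\in A}D(a)^2$, then, with $\Upsilon(A)$ computed for the enlarged center set, $\mathbb E[\Upsilon(A)]\le16M^4\,\Upsilon_{\mathrm{OPT}}(A)$. *)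

From mathcomp Require Import all_boot all_order all_algebra.
From mathcomp Require Import reals.
Set Implicit Arguments. Unset Strict Implicit. Unset Printing Implicit Defensive.
Import Order.TTheory GRing.Theory Num.Theory.
Local Open Scope ring_scope.

(* minsq d C x = min_{c in C} d(x,c)^2, for a nonempty finite center list C
   (returns 0 on the empty list, which is never used). *)
Definition minsq {X : Type} {R : realType} (d : X -> X -> R) (C : seq X) (x : X) : R :=
  match C with
  | [::] => 0
  | c :: C' => foldr (fun c' m => Num.min (d x c' ^+ 2) m) (d x c ^+ 2) C'
  end.

Definition Upsilon {X : Type} {R : realType} (d : X -> X -> R) (C A : seq X) : R :=
  \sum_(a <- A) minsq d C a.

From mathcomp Require Import all_boot all_order all_algebra.
From mathcomp Require Import reals.
From mathcomp Require Import ring lra.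
Set Implicit Arguments. Unset Strict Implicit. Unset Printing Implicit Defensive.
Import Order.TTheory GRing.Theory Num.Theory.
Local Open Scope ring_scope.

(** Squaring the relaxed triangle inequality gives
    [d(x,z)^2 <= 2M^2 (d(x,y)^2 + d(y,z)^2)].  Write [N = |A|], [D(b)] for the
    current cost of [b], [Phi = Upsilon_C(A)] and [P(b) = sum_(a in A) d(a,b)^2].
    Averaging [D(b) <= 2M^2 (d(b,a)^2 + D(a))] over [a] in [A] bounds [N D(b)] by
    [2M^2 (P(b) + Phi)]; since adding [b] leaves a cost [U(b) <= min(Phi, P(b))],
    each term [N D(b) U(b) / Phi] of the expectation is at most [4M^2 P(b)].
    Finally [sum_b P(b) <= 4M^2 N P(c0)] by the squared triangle inequality
    through [c0], and [P(c0)] is the optimal cost of the cluster [A]: only the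
    fact that [c0] is the nearest optimal center of every point of [A] is used,
    not the global optimality of [Copt]. *)

Lemma sumr_const_seq (V : nmodType) (I : Type) (s : seq I) (x : V) :
  \sum_(i <- s) x = x *+ size s.
Proof. by elim: s => [|i s IHs]; rewrite ?big_nil ?big_cons ?IHs ?mulrS. Qed.

Lemma sum_pairwise_addr (V : nmodType) (I : Type) (s : seq I) (f : I -> V) :
  \sum_(i <- s) \sum_(j <- s) (f j + f i) = (\sum_(i <- s) f i) *+ (size s).*2.
Proof.
under eq_bigr => i _ do rewrite big_split /= sumr_const_seq.
by rewrite big_split /= sumr_const_seq sumrMnl -mulrnDr addnn.
Qed.

Section MinSq.
Variables (R : realType) (X : eqType) (d : X -> X -> R).

Lemma foldr_min_le (g : X -> R) v s c :
  c \in v :: s -> foldr (fun c m => Num.min (g c) m) (g v) s <= g c.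
Proof.
elim: s c => [|a s IHs] c /=; first by rewrite mem_seq1 => /eqP->.
rewrite !inE ge_min => /or3P[/eqP-> | /eqP-> | cs].
- by rewrite IHs ?orbT ?mem_head.
- by rewrite lexx.
- by rewrite IHs ?orbT // inE cs orbT.
Qed.

Lemma foldr_min_attained (g : X -> R) v s :
  exists2 c, c \in v :: s & foldr (fun c m => Num.min (g c) m) (g v) s = g c.
Proof.
elim: s => [|a s [c cs IHs]] /=; first by exists v; rewrite ?mem_head.
rewrite IHs minEle; case: ifP => _; first by exists a; rewrite // !inE eqxx orbT.
by exists c; move: cs; rewrite // !inE => /orP[->|->]; rewrite ?orbT.
Qed.

Lemma minsq_le C x c : c \in C -> minsq d C x <= d x c ^+ 2.
Proof. by case: C => [//|v s]; apply: (foldr_min_le (fun c => d x c ^+ 2)). Qed.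

Lemma minsq_attained C x : C != [::] ->
  exists2 c, c \in C & minsq d C x = d x c ^+ 2.
Proof. by case: C => [//|v s] _; apply: (foldr_min_attained (fun c => d x c ^+ 2)). Qed.

Lemma minsq_ge0 C x : 0 <= minsq d C x.
Proof.
case: C => [//|v s]; have [c _ ->] := @minsq_attained (v :: s) x isT.
exact: sqr_ge0.
Qed.

Lemma minsq_subset C C' x : C != [::] -> {subset C <= C'} ->
  minsq d C' x <= minsq d C x.
Proof. by move=> /(minsq_attained x)[c cC ->] sCC'; apply/minsq_le/sCC'. Qed.

Lemma Upsilon_ge0 C A : 0 <= Upsilon d C A.
Proof. by apply: sumr_ge0 => a _; apply: minsq_ge0. Qed.

Lemma Upsilon_subset C C' A : C != [::] -> {subset C <= C'} ->
  Upsilon d C' A <= Upsilon d C A.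
Proof. by move=> C0 sCC'; apply: ler_sum => a _; apply: minsq_subset. Qed.

Lemma Upsilon1 c A : Upsilon d [:: c] A = \sum_(a <- A) d a c ^+ 2.
Proof. by []. Qed.

End MinSq.

Section RelaxedTriangle.
Variables (R : realType) (X : eqType) (d : X -> X -> R) (M : R).
Hypothesis d_ge0 : forall x y, 0 <= d x y.
Hypothesis d_sym : forall x y, d x y = d y x.
Hypothesis d_qtri : forall x y z, d x z <= M * (d x y + d y z).

Lemma sqr_qtri x y z : d x z ^+ 2 <= 2 * M ^+ 2 * (d x y ^+ 2 + d y z ^+ 2).
Proof.
have dxz_le := d_qtri x y z.
have sqr_le : d x z ^+ 2 <= (M * (d x y + d y z)) ^+ 2.
  by rewrite ler_sqr ?nnegrE //; apply: le_trans dxz_le.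
apply: le_trans sqr_le _; rewrite exprMn.
have := sqr_ge0 (d x y - d y z); have := sqr_ge0 M; rewrite !expr2; nra.
Qed.

Lemma minsq_qtri C x y : C != [::] ->
  minsq d C x <= 2 * M ^+ 2 * (d y x ^+ 2 + minsq d C y).
Proof.
move=> /(minsq_attained d y)[c cC ->].
by apply: le_trans (minsq_le d x cC) _; rewrite [d y x]d_sym; apply: sqr_qtri.
Qed.

Lemma Upsilon1_le_nearest c0 C A : c0 \in C ->
  (forall a c, a \in A -> c \in C -> d a c0 <= d a c) ->
  Upsilon d [:: c0] A <= Upsilon d C A.
Proof.
move=> c0C near; rewrite Upsilon1 big_seq [leRHS]big_seq; apply: ler_sum => a aA.
have C0 : C != [::] by apply: contraTneq c0C => ->.
have [c cC ->] := minsq_attained d a C0.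
by rewrite ler_sqr ?nnegrE //; apply: near.
Qed.

Lemma size_mul_minsq_le C A b : C != [::] ->
  (size A)%:R * minsq d C b <= 2 * M ^+ 2 * (Upsilon d [:: b] A + Upsilon d C A).
Proof.
move=> C0; rewrite mulr_natl -sumr_const_seq Upsilon1 -big_split mulr_sumr /=.
by apply: ler_sum => a _; apply: minsq_qtri.
Qed.

Lemma size_mul_weighted_cost_le C A b : C != [::] -> 0 < Upsilon d C A ->
  (size A)%:R * (minsq d C b / Upsilon d C A * Upsilon d (b :: C) A)
    <= 4 * M ^+ 2 * Upsilon d [:: b] A.
Proof.
move=> C0 Phi_gt0; set Phi := Upsilon d C A; set P := Upsilon d [:: b] A.
set t := Upsilon d (b :: C) A / Phi.
have t_ge0 : 0 <= t by rewrite divr_ge0 ?Upsilon_ge0 ?ltW.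
have U_lePhi : Upsilon d (b :: C) A <= Phi.
  by apply: Upsilon_subset => // c cC; rewrite inE cC orbT.
have tPhi_leP : t * Phi <= P.
  rewrite divfK ?gt_eqF //; apply: Upsilon_subset => // c.
  by rewrite mem_seq1 => /eqP->; rewrite mem_head.
have t_le1 : t <= 1 by rewrite ler_pdivrMr // mul1r.
have P_ge0 : 0 <= P := Upsilon_ge0 d _ _.
have -> : (size A)%:R * (minsq d C b / Phi * Upsilon d (b :: C) A)
    = (size A)%:R * minsq d C b * t by rewrite /t; field; rewrite gt_eqF.
apply: le_trans (ler_wpM2r t_ge0 (size_mul_minsq_le A b C0)) _.
have PPhi_t_le : (P + Phi) * t <= 2 * P by nra.
rewrite -/P -/Phi -[_ * (P + Phi) * t]mulrA; apply: le_trans (ler_wpM2l _ PPhi_t_le) _.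
  by rewrite mulr_ge0 ?sqr_ge0.
lra.
Qed.

Lemma sum_Upsilon1_le A c :
  \sum_(b <- A) Upsilon d [:: b] A <= 4 * M ^+ 2 * (size A)%:R * Upsilon d [:: c] A.
Proof.
have pair_le b a : d a b ^+ 2 <= 2 * M ^+ 2 * (minsq d [:: c] a + minsq d [:: c] b).
  by rewrite /= [d b c]d_sym; apply: sqr_qtri.
apply: le_trans (ler_sum _ (fun b _ => ler_sum _ (fun a _ => pair_le b a))) _.
under eq_bigr => b _ do rewrite -mulr_sumr.
rewrite -mulr_sumr sum_pairwise_addr -/(Upsilon d [:: c] A).
rewrite -[_ *+ _.*2]mulr_natr -muln2 natrM.
lra.
Qed.

End RelaxedTriangle.

Theorem lemma3 (R : realType) (X : eqType) (d : X -> X -> R) (M : R)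
  (d_ge0 : forall x y, 0 <= d x y)
  (d_sym : forall x y, d x y = d y x)
  (d_qtri : forall x y z, d x z <= M * (d x y + d y z))
  (S : seq X) (S_uniq : uniq S)
  (K : nat) (K_gt0 : (0 < K)%N)
  (Copt : seq X) (Copt_uniq : uniq Copt) (Copt_size : size Copt = K)
  (Copt_opt : forall C' : seq X, uniq C' -> size C' = K ->
      Upsilon d Copt S <= Upsilon d C' S)
  (f : X -> X)
  (f_in : forall x, x \in S -> f x \in Copt)
  (f_near : forall x c, x \in S -> c \in Copt -> d x (f x) <= d x c)
  (c0 : X) (c0_in : c0 \in Copt)
  (A : seq X) (A_def : A = [seq x <- S | f x == c0])
  (C : seq X) (C_ne : C != [::])
  (hpos : 0 < Upsilon d C A) :
  \sum_(a0 <- A) (minsq d C a0 / Upsilon d C A) * Upsilon d (a0 :: C) A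
    <= 16 * M ^+ 4 * Upsilon d Copt A.
Proof.
have N_gt0 : 0 < (size A)%:R :> R.
  by move: hpos; rewrite ltr0n; case: (A) => //; rewrite /Upsilon big_nil ltxx.
have cluster_cost : Upsilon d [:: c0] A <= Upsilon d Copt A.
  apply: Upsilon1_le_nearest => // a c; rewrite A_def mem_filter => /andP[/eqP <- aS].
  exact: f_near.
rewrite -(ler_pM2l N_gt0) mulr_sumr.
have term_le b := size_mul_weighted_cost_le d_ge0 d_sym d_qtri b C_ne hpos.
apply: le_trans (ler_sum _ (fun b _ => term_le b)) _.
rewrite -mulr_sumr.
apply: le_trans (ler_wpM2l _ (sum_Upsilon1_le d_ge0 d_sym d_qtri A c0)) _.
  by rewrite mulr_ge0 ?sqr_ge0.
have -> : 4 * M ^+ 2 * (4 * M ^+ 2 * (size A)%:R * Upsilon d [:: c0] A)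
    = (size A)%:R * (16 * M ^+ 4 * Upsilon d [:: c0] A) by ring.
rewrite ler_pM2l //; apply: (ler_wpM2l _ cluster_cost).
by rewrite mulr_ge0 // exprn_even_ge0.
Qed.
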